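(* Let $G$ be a finite simple connected graph and let $S\subseteq V(G)$ with $|S|=k\geq 2$. Then $\kappa_k^*(G)\leq \kappa_k^*(G[S])+(|V(G)|-k)$.
   Context: $G[S]$ is the subgraph of $G$ induced by $S$. For $S\subseteq V(H)$ with $|S|\ge 2$, an $S$-Steiner tree of a graph $H$ is a subtree $T$ of $H$ with $S\subseteq V(T)$ all of whose leaves belong to $S$. A family of $S$-Steiner trees $T_1,\dots,T_k$ is completely independent if for all $1\le p<q\le k$: $E(T_p)\cap E(T_q)=\emptyset$, $V(T_p)\cap V(T_q)=S$, and for any two vertices $x_1,x_2\in S$ the $(x_1,x_2)$-paths in $T_p$ and in $T_q$ are internally disjoint. $\kappa^*_H(S)$ is the maximum number of trees in a completely independent family of $S$-Steiner trees in $H$, and $\kappa_k^*(H)=\min\{\kappa^*_H(S): S\subseteq V(H),\ |S|=k\}$. *)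

From mathcomp Require Import all_boot.
From Stdlib Require Import ClassicalDescription.
Set Implicit Arguments. Unset Strict Implicit. Unset Printing Implicit Defensive.

(* A graph H is given by a vertex set V : {set T} over a finite type T and an
   adjacency relation e : rel T (symmetric, irreflexive); only edges between
   vertices of V count.  The induced subgraph G[S] of G = (setT, e) is (S, e). *)

Definition pbool (P : Prop) : bool :=
  if excluded_middle_informative P then true else false.

Section Steiner.
Variable T : finType.

(* A candidate subgraph: a vertex set and a set of edges (2-element sets). *)
Definition sgraph := ({set T} * {set {set T}})%type.

Definition tadj (Tr : sgraph) (x y : T) : bool := [set x; y] \in Tr.2.

Definition is_subgraph (V : {set T}) (e : rel T) (Tr : sgraph) : Prop :=
  Tr.1 \subset V /\
  forall E, E \in Tr.2 ->
    exists x y, [/\ E = [set x; y], x != y, x \in Tr.1, y \in Tr.1 & e x y].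

Definition tpath (Tr : sgraph) (x y : T) (p : seq T) : Prop :=
  [/\ uniq (x :: p), path (tadj Tr) x p & last x p = y].

Definition tconnected (Tr : sgraph) : Prop :=
  forall x y, x \in Tr.1 -> y \in Tr.1 -> exists p, tpath Tr x y p.

Definition tacyclic (Tr : sgraph) : Prop :=
  ~ exists x p, [/\ uniq (x :: p), 2 <= size p, path (tadj Tr) x p
                  & tadj Tr (last x p) x].

Definition is_tree (Tr : sgraph) : Prop :=
  Tr.1 != set0 /\ tconnected Tr /\ tacyclic Tr.

Definition is_leaf (Tr : sgraph) (x : T) : bool :=
  (x \in Tr.1) && (#|[set y | tadj Tr x y]| == 1).

Definition steiner_tree (V : {set T}) (e : rel T) (S : {set T}) (Tr : sgraph)
  : Prop :=
  is_subgraph V e Tr /\ is_tree Tr /\ S \subset Tr.1 /\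
  (forall x, is_leaf Tr x -> x \in S).

Definition internal (x y : T) (p : seq T) (z : T) : bool := (z \in p) && (z != y).

Definition compl_indep (S : {set T}) (T1 T2 : sgraph) : Prop :=
  [disjoint T1.2 & T2.2] /\ T1.1 :&: T2.1 = S /\
  forall x1 x2, x1 \in S -> x2 \in S ->
    forall p q, tpath T1 x1 x2 p -> tpath T2 x1 x2 q ->
      forall z, internal x1 x2 p z -> ~~ internal x1 x2 q z.

Definition has_ci_family (V : {set T}) (e : rel T) (S : {set T}) (n : nat)
  : Prop :=
  exists F : 'I_n -> sgraph,
    (forall i, steiner_tree V e S (F i)) /\
    (forall i j, i != j -> compl_indep S (F i) (F j)).

(* kappa*_H(S): the maximum such n.  For #|S| >= 2 every tree has an edge and
   the trees are edge-disjoint, so n <= #|T|^2 and the bound is harmless. *)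
Definition kappaS (V : {set T}) (e : rel T) (S : {set T}) : nat :=
  \max_(n < (#|T| ^ 2).+1 | pbool (has_ci_family V e S n)) n.

Definition kappa_k (V : {set T}) (e : rel T) (k : nat) : nat :=
  \big[minn/(#|T| ^ 2).+1]_(S : {set T} | (S \subset V) && (#|S| == k))
     kappaS V e S.

End Steiner.

(* A tree of a completely independent family for S in G that is not contained in
   S owns a vertex outside S, and distinct trees meet exactly in S, so at most
   |V(G)| - |S| trees leave S.  The remaining trees are S-Steiner trees of G[S]
   and still completely independent. *)

From HB Require Import structures.
From mathcomp Require Import all_boot.
From Stdlib Require Import ClassicalDescription.

Set Implicit Arguments.
Unset Strict Implicit.
Unset Printing Implicit Defensive.

HB.instance Definition _ := SemiGroup.isComLaw.Build nat minn minnA minnC.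

Lemma pboolP (P : Prop) : reflect P (pbool P).
Proof. by rewrite /pbool; case: excluded_middle_informative => h; constructor. Qed.

Section InducedFamily.
Variable T : finType.
Implicit Types (V W S : {set T}) (e : rel T).

Lemma steiner_tree_sub V W e S (Tr : sgraph T) :
  steiner_tree V e S Tr -> Tr.1 \subset W -> steiner_tree W e S Tr.
Proof. by move=> [[_ Tr_e] Tr_tree] Tr_W; split. Qed.

Lemma has_ci_family_sub V W e S n (F : 'I_n -> sgraph T) :
    (forall i, steiner_tree V e S (F i)) ->
    (forall i j, i != j -> compl_indep S (F i) (F j)) ->
  has_ci_family W e S #|[set i | (F i).1 \subset W]|.
Proof.
move=> F_tree F_indep; exists (fun j => F (enum_val j)); split.
- move=> j; apply: steiner_tree_sub (F_tree _) _.
  by have := enum_valP j; rewrite inE.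
- by move=> j j' ne_jj'; apply: F_indep; rewrite (inj_eq enum_val_inj).
Qed.

Lemma card_not_subset_overlap (I : finType) V S (F : I -> {set T}) :
    (forall i, F i \subset V) ->
    (forall i j, i != j -> F i :&: F j \subset S) ->
  #|[set i | ~~ (F i \subset S)]| <= #|V :\: S|.
Proof.
move=> F_V F_overlap; set out := [set i | _].
have [V_S | [x0 _]] := set_0Vmem (V :\: S).
  suff -> : out = set0 by rewrite cards0.
  apply/setP => i; rewrite !inE; apply/negbTE; rewrite negbK.
  by apply: subset_trans (F_V i) _; rewrite -setD_eq0 V_S.
pose f i := odflt x0 [pick x in F i :\: S].
have f_out i : i \in out -> f i \in F i :\: S.
  rewrite inE => /subsetPn [x x_Fi x_S]; rewrite /f.
  case: pickP => [y|no_pick] //=.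
  by have := no_pick x; rewrite !inE x_S x_Fi.
have f_inj : {in out &, injective f}.
  move=> i j i_out j_out fij; apply: contraTeq isT => ne_ij.
  have := subsetP (F_overlap i j ne_ij) (f i).
  have := f_out i i_out; have := f_out j j_out.
  by rewrite -fij !inE => /andP[_ ->] /andP[/negbTE -> ->] /(_ isT).
rewrite -(card_in_imset f_inj); apply/subset_leq_card/subsetP => _ /imsetP[i i_out ->].
by have := f_out i i_out; rewrite !inE => /andP[-> /(subsetP (F_V i))->].
Qed.

Lemma has_ci_family_induced V e S n :
    has_ci_family V e S n ->
  exists m, [/\ m <= n, has_ci_family S e S m & n <= m + #|V :\: S|].
Proof.
move=> [F [F_tree F_indep]]; set inS := [set i | (F i).1 \subset S].
exists #|inS|; split.
- by rewrite -[n in _ <= n]card_ord max_card.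
- exact: has_ci_family_sub F_tree F_indep.
- rewrite -[n in n <= _]card_ord -(cardsC inS) leq_add2l.
  have -> : ~: inS = [set i | ~~ ((F i).1 \subset S)].
    by apply/setP => i; rewrite !inE.
  apply: card_not_subset_overlap => [i | i j ne_ij].
    by have [[]] := F_tree i.
  by have [_ [-> _]] := F_indep i j ne_ij.
Qed.

End InducedFamily.

Section KappaBounds.
Variable T : finType.
Implicit Types (V S : {set T}) (e : rel T).

Lemma kappaS_max V e S : kappaS V e S <= #|T| ^ 2.
Proof. by apply/bigmax_leqP => i _; rewrite -ltnS. Qed.

Lemma leq_kappaS V e S n :
  n <= #|T| ^ 2 -> has_ci_family V e S n -> n <= kappaS V e S.
Proof.
rewrite -ltnS => lt_n fam_n.
by apply: (leq_bigmax_cond (Ordinal lt_n)); apply/pboolP.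
Qed.

Lemma kappa_k_leq_kappaS V e S : S \subset V -> kappa_k V e #|S| <= kappaS V e S.
Proof. by move=> sSV; rewrite /kappa_k (bigD1 S) ?sSV ?eqxx //= geq_minl. Qed.

Lemma kappa_k_self e S : kappa_k S e #|S| = kappaS S e S.
Proof.
rewrite /kappa_k (big_pred1_id _ _ (i := S)) => [|S']; last first.
  rewrite /=; apply/andP/eqP => [[sSS' /eqP eq_card] | ->]; last by rewrite subxx.
  by apply/eqP; rewrite eqEcard sSS' eq_card leqnn.
by apply/minn_idPl; rewrite ltnW // ltnS kappaS_max.
Qed.

Lemma kappaS_leq_induced V e S :
  kappaS V e S <= kappaS S e S + #|V :\: S|.
Proof.
apply/bigmax_leqP => n /pboolP fam_n.
have [m [le_mn fam_m le_n]] := has_ci_family_induced fam_n.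
apply: leq_trans le_n _; rewrite leq_add2r leq_kappaS //.
by apply: leq_trans le_mn _; rewrite -ltnS.
Qed.

End KappaBounds.

Theorem theorem2p4 (T : finType) (e : rel T)
  (e_sym : symmetric e) (e_irr : irreflexive e)
  (G_conn : forall x y : T, connect e x y)
  (S : {set T}) (hS : 2 <= #|S|) :
  kappa_k [set: T] e #|S| <= kappa_k S e #|S| + (#|T| - #|S|).
Proof.
rewrite kappa_k_self -cardsT -(cardsDS (subsetT S)).
exact: leq_trans (kappa_k_leq_kappaS e (subsetT S)) (kappaS_leq_induced _ _ _).
Qed.
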